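(* For every $m\times n$ XOR non-local game $G$ there are non-negative constants $c_1,\dots,c_m$ such that for every $0\le\epsilon<1/(4(m+n))$ and every $\epsilon$-optimal vector strategy $\{u_i\},\{v_j\}$ for $G$, $$\Bigl\|\sum_jG_{ij}v_j-c_iu_i\Bigr\|\le\sqrt{10}\,(m+n)^{1/4}\epsilon^{1/4}\qquad(1\le i\le m).$$ In particular, for every optimal vector strategy $\sum_jG_{ij}v_j=c_iu_i$ and $\sum_jG_{ij}u_i\cdot v_j=c_i$. If $G$ has no zero rows then all $c_i$ are strictly positive.
   Context: An $m\times n$ XOR non-local game has real cost matrix $G=(G_{ij})$ with $\sum|G_{ij}|=1$. A vector strategy for $G$ is a pair of families of unit vectors $u_1,\dots,u_m$, $v_1,\dots,v_n$ in some $\mathbb{R}^N$, with bias $\sum_{i,j}G_{ij}u_i\cdot v_j$. The quantum success bias $\varepsilon_q(G)$ equals the maximum bias over all vector strategies; a vector strategy is $\epsilon$-optimal if its bias is at least $\varepsilon_q(G)-\epsilon$, and optimal if $\epsilon=0$. *)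

From Stdlib Require Import Reals Lra Lia ClassicalEpsilon.
Open Scope R_scope.

Fixpoint sumR (n : nat) (f : nat -> R) : R :=
  match n with
  | O => 0
  | S k => sumR k f + f k
  end.

(* A vector in R^N is a function nat -> R, only coordinates k < N matter. *)
Definition dot (N : nat) (x y : nat -> R) : R := sumR N (fun k => x k * y k).
Definition vnorm (N : nat) (x : nat -> R) : R := sqrt (dot N x x).

Definition xor_game (m n : nat) (G : nat -> nat -> R) : Prop :=
  sumR m (fun i => sumR n (fun j => Rabs (G i j))) = 1.

Definition vector_strategy (m n N : nat) (u v : nat -> nat -> R) : Prop :=
  (forall i, (i < m)%nat -> dot N (u i) (u i) = 1) /\
  (forall j, (j < n)%nat -> dot N (v j) (v j) = 1).

Definition bias (m n N : nat) (G : nat -> nat -> R) (u v : nat -> nat -> R) : R :=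
  sumR m (fun i => sumR n (fun j => G i j * dot N (u i) (v j))).

Definition bias_set (m n : nat) (G : nat -> nat -> R) (b : R) : Prop :=
  exists N u v, vector_strategy m n N u v /\ b = bias m n N G u v.

(* Quantum success bias: the supremum (in fact maximum) of the biases. *)
Definition eps_q (m n : nat) (G : nat -> nat -> R) : R :=
  epsilon (inhabits 0) (fun q => is_lub (bias_set m n G) q).

Definition eps_optimal (m n N : nat) (G : nat -> nat -> R) (eps : R)
  (u v : nat -> nat -> R) : Prop :=
  vector_strategy m n N u v /\ bias m n N G u v >= eps_q m n G - eps.

Definition optimal (m n N : nat) (G : nat -> nat -> R) (u v : nat -> nat -> R) : Prop :=
  eps_optimal m n N G 0 u v.

Definition row_comb (n : nat) (G : nat -> nat -> R) (i : nat) (v : nat -> nat -> R)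
  : nat -> R := fun k => sumR n (fun j => G i j * v j k).

From Stdlib Require Import Reals Lra Lia Psatz ClassicalEpsilon Classical.
Open Scope R_scope.

(* Write r_i = Σ_j G_ij v_j. Replacing every u_i by r_i/|r_i| gives another
   strategy, so Σ_i |r_i| <= ε_q, while u_i·r_i <= |r_i| by Cauchy–Schwarz;
   hence for an ε-optimal strategy each defect |r_i| - u_i·r_i lies in [0, ε].
   The average of two near-optimal strategies (their direct sum scaled by
   1/√2) is near-optimal and has |r_i|² averaged; its small defect bounds the
   gap between the root mean square and the mean of the two row norms.  So the
   row norms of all ε-optimal strategies agree up to 2√ε, and c_i is their
   common limit.  Then |r_i - c_i u_i|² = (|r_i| - c_i)² + 2c_i(|r_i| - u_i·r_i)
   is O(ε), which is stronger than the stated ε^(1/4) bound.  If row i is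
   nonzero, c_i > 0 because a strategy with tiny row norm could be improved by
   playing row i along a fresh orthogonal direction. *)

Lemma Rabs_le_inv a b : Rabs a <= b -> - b <= a <= b.
Proof. unfold Rabs; destruct (Rcase_abs a); lra. Qed.

Lemma Rmult_self_div a : a * a / a = a.
Proof.
  destruct (Req_EM_T a 0) as [-> | Ha].
  - unfold Rdiv; rewrite Rinv_0; ring.
  - field; exact Ha.
Qed.

Lemma lub_epsilon_spec (E : R -> Prop) :
  bound E -> (exists x, E x) -> is_lub E (epsilon (inhabits 0) (is_lub E)).
Proof.
  intros Hb Hne; apply epsilon_spec.
  destruct (completeness E Hb Hne) as [q Hq]; exists q; exact Hq.
Qed.

Lemma sqr_sub_le_rms_sub_mean a1 a2 : 0 <= a1 <= 1 -> 0 <= a2 <= 1 ->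
  (a1 - a2) ^ 2 <= 8 * (sqrt ((a1 ^ 2 + a2 ^ 2) / 2) - (a1 + a2) / 2).
Proof.
  intros H1 H2; set (r := sqrt _).
  assert (Hr : r * r = (a1 ^ 2 + a2 ^ 2) / 2) by (apply sqrt_sqrt; nra).
  assert (0 <= r) by apply sqrt_pos.
  assert ((a1 + a2) / 2 <= r).
  { apply Rnot_lt_le; intros Hlt.
    assert (r * r < (a1 + a2) / 2 * ((a1 + a2) / 2)) by (apply Rmult_le_0_lt_compat; lra).
    pose proof (pow2_ge_0 (a1 - a2)); nra. }
  assert (r <= 1) by nra.
  nra.
Qed.

Lemma sqr_le_of_hypot_le a b t : 0 < a <= 1 -> -2 <= b <= 2 ->
  sqrt (b ^ 2 + a ^ 2) <= b + t -> a ^ 2 <= 6 * t.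
Proof.
  intros Ha Hb; set (r := sqrt _); intros Hrt.
  assert (Hr : r * r = b ^ 2 + a ^ 2) by (apply sqrt_sqrt; nra).
  assert (0 <= r) by apply sqrt_pos.
  assert (r <= 3) by nra.
  assert (b <= r) by nra.
  nra.
Qed.

Lemma sqrt_le_half x : x <= 1 / 4 -> sqrt x <= 1 / 2.
Proof. intros Hx; rewrite <- (sqrt_square (1 / 2)) by lra; apply sqrt_le_1_alt; lra. Qed.

Lemma sumR_ext n f g : (forall k, (k < n)%nat -> f k = g k) -> sumR n f = sumR n g.
Proof.
  induction n as [|n IH]; simpl; intros H; [reflexivity|].
  rewrite IH by (intros; apply H; lia); rewrite H by lia; reflexivity.
Qed.

Lemma sumR_zero n : sumR n (fun _ => 0) = 0.
Proof. induction n as [|n IH]; simpl; [|rewrite IH]; ring. Qed.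

Lemma sumR_plus n f g : sumR n (fun k => f k + g k) = sumR n f + sumR n g.
Proof. induction n as [|n IH]; simpl; [|rewrite IH]; ring. Qed.

Lemma sumR_minus n f g : sumR n (fun k => f k - g k) = sumR n f - sumR n g.
Proof. induction n as [|n IH]; simpl; [|rewrite IH]; ring. Qed.

Lemma sumR_scal n c f : sumR n (fun k => c * f k) = c * sumR n f.
Proof. induction n as [|n IH]; simpl; [|rewrite IH]; ring. Qed.

Lemma sumR_mean n f g : sumR n (fun k => (f k + g k) / 2) = (sumR n f + sumR n g) / 2.
Proof. induction n as [|n IH]; simpl; [|rewrite IH]; field. Qed.

Lemma sumR_swap n m f :
  sumR n (fun i => sumR m (fun j => f i j)) = sumR m (fun j => sumR n (fun i => f i j)).
Proof.
  induction n as [|n IH]; simpl.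
  - symmetry; apply sumR_zero.
  - rewrite IH, <- sumR_plus; reflexivity.
Qed.

Lemma sumR_split a b f : sumR (a + b) f = sumR a f + sumR b (fun k => f (a + k)%nat).
Proof.
  induction b as [|b IH]; simpl.
  - rewrite Nat.add_0_r; ring.
  - rewrite Nat.add_succ_r; simpl; rewrite IH; ring.
Qed.

Lemma sumR_update m f x i0 : (i0 < m)%nat ->
  sumR m (fun i => if Nat.eqb i i0 then x else f i) = sumR m f - f i0 + x.
Proof.
  induction m as [|m IH]; simpl; intros Hi0; [lia|].
  destruct (Nat.eq_dec i0 m) as [-> | Hne].
  - rewrite Nat.eqb_refl, (sumR_ext m _ f); [ring|].
    intros k Hk; destruct (Nat.eqb_spec k m); [lia | reflexivity].
  - rewrite IH by lia; destruct (Nat.eqb_spec m i0); [lia | ring].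
Qed.

Lemma sumR_le n f g : (forall k, (k < n)%nat -> f k <= g k) -> sumR n f <= sumR n g.
Proof.
  induction n as [|n IH]; simpl; intros H; [lra|].
  apply Rplus_le_compat; [apply IH; intros; apply H|apply H]; lia.
Qed.

Lemma sumR_nonneg n f : (forall k, (k < n)%nat -> 0 <= f k) -> 0 <= sumR n f.
Proof. intros H; rewrite <- (sumR_zero n); apply sumR_le; exact H. Qed.

Lemma term_le_sumR n f i :
  (forall k, (k < n)%nat -> 0 <= f k) -> (i < n)%nat -> f i <= sumR n f.
Proof.
  induction n as [|n IH]; simpl; intros H Hi; [lia|].
  assert (0 <= f n) by (apply H; lia).
  destruct (Nat.eq_dec i n) as [-> | Hne].
  - assert (0 <= sumR n f) by (apply sumR_nonneg; intros; apply H; lia); lra.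
  - assert (f i <= sumR n f) by (apply IH; [intros; apply H|]; lia); lra.
Qed.

Lemma Rabs_sumR_le n f : Rabs (sumR n f) <= sumR n (fun k => Rabs (f k)).
Proof.
  induction n as [|n IH]; simpl; [rewrite Rabs_R0; lra|].
  eapply Rle_trans; [apply Rabs_triang | lra].
Qed.

Lemma Rabs_wsum_le n a d B : (forall l, (l < n)%nat -> Rabs (d l) <= B) ->
  Rabs (sumR n (fun l => a l * d l)) <= B * sumR n (fun l => Rabs (a l)).
Proof.
  intros H; eapply Rle_trans; [apply Rabs_sumR_le|].
  rewrite <- sumR_scal; apply sumR_le; intros l Hl.
  rewrite Rabs_mult; pose proof (Rabs_pos (a l)); specialize (H l Hl); nra.
Qed.

Lemma dot_ext N x y x' y' :
  (forall k, (k < N)%nat -> x k = x' k) -> (forall k, (k < N)%nat -> y k = y' k) ->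
  dot N x y = dot N x' y'.
Proof.
  intros Hx Hy; unfold dot; apply sumR_ext; intros; rewrite Hx, Hy by assumption; reflexivity.
Qed.

Lemma dot_comm N x y : dot N x y = dot N y x.
Proof. unfold dot; apply sumR_ext; intros; ring. Qed.

Lemma dot_nonneg N x : 0 <= dot N x x.
Proof. unfold dot; apply sumR_nonneg; intros; nra. Qed.

Lemma dot_scal_l N x y t : dot N (fun k => x k * t) y = t * dot N x y.
Proof. unfold dot; rewrite <- sumR_scal; apply sumR_ext; intros; ring. Qed.

Lemma dot_scal_r N x y t : dot N x (fun k => y k * t) = t * dot N x y.
Proof. rewrite dot_comm, dot_scal_l, dot_comm; reflexivity. Qed.

Lemma dot_zero_l N y : dot N (fun _ => 0) y = 0.
Proof.
  unfold dot; transitivity (sumR N (fun _ => 0)); [apply sumR_ext; intros; ring | apply sumR_zero].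
Qed.

Lemma dot_const1 a b : dot 1 (fun _ => a) (fun _ => b) = a * b.
Proof. unfold dot; simpl; ring. Qed.

Lemma dot_sub_scal N x y t :
  dot N (fun k => x k - t * y k) (fun k => x k - t * y k)
  = dot N x x - 2 * t * dot N y x + t * t * dot N y y.
Proof.
  unfold dot.
  rewrite (sumR_ext N _ (fun k => x k * x k + (- (2 * t) * (y k * x k) + (t * t) * (y k * y k))))
    by (intros; ring).
  rewrite !sumR_plus, !sumR_scal; ring.
Qed.

Lemma dot_self_eq0 N x : dot N x x = 0 -> forall k, (k < N)%nat -> x k = 0.
Proof.
  intros H k Hk.
  assert (x k * x k <= dot N x x)
    by (apply (term_le_sumR N (fun k => x k * x k)); [intros; nra | exact Hk]).
  nra.
Qed.

Lemma vnorm_sqr N x : vnorm N x * vnorm N x = dot N x x.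
Proof. apply sqrt_sqrt, dot_nonneg. Qed.

Lemma Rabs_dot_le_unit N u w : dot N u u = 1 -> Rabs (dot N u w) <= vnorm N w.
Proof.
  intros Hu; set (q := dot N u w).
  assert (Hq : q * q <= dot N w w).
  { pose proof (dot_nonneg N (fun k => w k - q * u k)) as H.
    rewrite dot_sub_scal, Hu in H; fold q in H; lra. }
  rewrite <- (Rabs_pos_eq (vnorm N w)) by apply sqrt_pos.
  apply Rsqr_le_abs_0; unfold Rsqr; rewrite vnorm_sqr; exact Hq.
Qed.

Lemma Rabs_dot_unit_le1 N u w : dot N u u = 1 -> dot N w w = 1 -> Rabs (dot N u w) <= 1.
Proof. intros Hu Hw; rewrite <- sqrt_1, <- Hw; apply Rabs_dot_le_unit, Hu. Qed.

Definition cat (N1 : nat) (x y : nat -> R) : nat -> R :=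
  fun k => if Nat.ltb k N1 then x k else y (k - N1)%nat.

Lemma dot_cat N1 N2 x1 x2 y1 y2 :
  dot (N1 + N2) (cat N1 x1 x2) (cat N1 y1 y2) = dot N1 x1 y1 + dot N2 x2 y2.
Proof.
  unfold dot; rewrite sumR_split; f_equal; apply sumR_ext; intros k Hk; unfold cat.
  - destruct (Nat.ltb_spec k N1); [reflexivity | lia].
  - destruct (Nat.ltb_spec (N1 + k) N1); [lia|].
    replace (N1 + k - N1)%nat with k by lia; reflexivity.
Qed.

(* The last coordinate keeps [unit_dir N x] a unit vector when [x = 0]. *)
Definition unit_dir N (x : nat -> R) : nat -> R :=
  cat N (fun k => x k * / vnorm N x) (fun _ => if Req_EM_T (vnorm N x) 0 then 1 else 0).

Lemma unit_dir_unit N x : dot (N + 1) (unit_dir N x) (unit_dir N x) = 1.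
Proof.
  unfold unit_dir; rewrite dot_cat, dot_scal_l, dot_scal_r, dot_const1, <- vnorm_sqr.
  destruct (Req_EM_T (vnorm N x) 0) as [-> | Hx]; [|field; exact Hx].
  rewrite Rinv_0; ring.
Qed.

Lemma dot_unit_dir N x y :
  dot (N + 1) (unit_dir N x) (cat N y (fun _ => 0)) = dot N x y / vnorm N x.
Proof. unfold unit_dir; rewrite dot_cat, dot_scal_l, dot_const1; unfold Rdiv; ring. Qed.

Definition cat_avg (N1 : nat) (x y : nat -> R) : nat -> R :=
  cat N1 (fun k => x k * / sqrt 2) (fun k => y k * / sqrt 2).

Lemma dot_cat_avg N1 N2 x1 y1 x2 y2 :
  dot (N1 + N2) (cat_avg N1 x1 y1) (cat_avg N1 x2 y2) = (dot N1 x1 x2 + dot N2 y1 y2) / 2.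
Proof.
  unfold cat_avg; rewrite dot_cat, !dot_scal_l, !dot_scal_r.
  assert (H2 : sqrt 2 * sqrt 2 = 2) by (apply sqrt_sqrt; lra).
  assert (0 < sqrt 2) by (apply sqrt_lt_R0; lra).
  set (s := sqrt 2) in *; rewrite <- H2; field; lra.
Qed.

Section Game.

Variables (m n : nat) (G : nat -> nat -> R).

Definition row_l1 i := sumR n (fun j => Rabs (G i j)).

Definition row_bias N (u v : nat -> nat -> R) i := dot N (u i) (row_comb n G i v).

Lemma dot_row_comb N x i v :
  dot N x (row_comb n G i v) = sumR n (fun j => G i j * dot N x (v j)).
Proof.
  unfold dot, row_comb.
  rewrite (sumR_ext N _ (fun k => sumR n (fun j => G i j * (x k * v j k)))).
  - rewrite sumR_swap; apply sumR_ext; intros; apply sumR_scal.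
  - intros k _; rewrite <- sumR_scal; apply sumR_ext; intros; ring.
Qed.

Lemma bias_rows N u v : bias m n N G u v = sumR m (row_bias N u v).
Proof. apply sumR_ext; intros i _; symmetry; apply dot_row_comb. Qed.

Lemma row_l1_nonneg i : 0 <= row_l1 i.
Proof. apply sumR_nonneg; intros; apply Rabs_pos. Qed.

Lemma Rabs_row_bias_le N u v i : vector_strategy m n N u v -> (i < m)%nat ->
  Rabs (row_bias N u v i) <= row_l1 i.
Proof.
  intros [Hu Hv] Hi; unfold row_bias; rewrite dot_row_comb, <- (Rmult_1_l (row_l1 i)).
  apply Rabs_wsum_le; intros; apply Rabs_dot_unit_le1; auto.
Qed.

Lemma vnorm_row_comb_le N v i : (forall j, (j < n)%nat -> dot N (v j) (v j) = 1) ->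
  vnorm N (row_comb n G i v) <= row_l1 i.
Proof.
  intros Hv; set (r := row_comb n G i v).
  assert (Hrr : vnorm N r * vnorm N r <= vnorm N r * row_l1 i).
  { rewrite vnorm_sqr; eapply Rle_trans; [apply Rle_abs|].
    unfold r at 2; rewrite dot_row_comb.
    apply Rabs_wsum_le; intros j Hj.
    rewrite dot_comm; apply Rabs_dot_le_unit, Hv, Hj. }
  pose proof (sqrt_pos (dot N r r)); pose proof (row_l1_nonneg i); fold (vnorm N r) in *.
  nra.
Qed.

Lemma row_bias_le_vnorm N u v i : vector_strategy m n N u v -> (i < m)%nat ->
  row_bias N u v i <= vnorm N (row_comb n G i v).
Proof.
  intros [Hu _] Hi; eapply Rle_trans; [apply Rle_abs | apply Rabs_dot_le_unit, Hu, Hi].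
Qed.

Lemma bias_cat_avg N1 N2 u1 v1 u2 v2 :
  bias m n (N1 + N2) G (fun i => cat_avg N1 (u1 i) (u2 i)) (fun j => cat_avg N1 (v1 j) (v2 j))
  = (bias m n N1 G u1 v1 + bias m n N2 G u2 v2) / 2.
Proof.
  unfold bias; rewrite <- sumR_mean; apply sumR_ext; intros i _.
  rewrite <- sumR_mean; apply sumR_ext; intros j _; rewrite dot_cat_avg; field.
Qed.

Lemma cat_avg_eps_optimal N1 N2 e1 e2 u1 v1 u2 v2 :
  eps_optimal m n N1 G e1 u1 v1 -> eps_optimal m n N2 G e2 u2 v2 ->
  eps_optimal m n (N1 + N2) G ((e1 + e2) / 2)
    (fun i => cat_avg N1 (u1 i) (u2 i)) (fun j => cat_avg N1 (v1 j) (v2 j)).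
Proof.
  intros [[Hu1 Hv1] Hb1] [[Hu2 Hv2] Hb2]; repeat split.
  - intros i Hi; rewrite dot_cat_avg, Hu1, Hu2 by exact Hi; field.
  - intros j Hj; rewrite dot_cat_avg, Hv1, Hv2 by exact Hj; field.
  - rewrite bias_cat_avg; lra.
Qed.

Lemma row_comb_cat_avg N1 v1 v2 i k :
  row_comb n G i (fun j => cat_avg N1 (v1 j) (v2 j)) k
  = cat_avg N1 (row_comb n G i v1) (row_comb n G i v2) k.
Proof.
  unfold row_comb, cat_avg, cat; destruct (Nat.ltb k N1);
    rewrite Rmult_comm, <- sumR_scal; apply sumR_ext; intros; ring.
Qed.

Section Optimality.

Hypothesis game : xor_game m n G.

Lemma row_l1_le1 i : (i < m)%nat -> row_l1 i <= 1.
Proof.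
  intros Hi; rewrite <- game.
  apply (term_le_sumR m row_l1); [intros; apply row_l1_nonneg | exact Hi].
Qed.

Lemma Rabs_bias_le1 N u v : vector_strategy m n N u v -> Rabs (bias m n N G u v) <= 1.
Proof.
  intros Hs; rewrite bias_rows, <- game.
  eapply Rle_trans; [apply Rabs_sumR_le | apply sumR_le].
  intros i Hi; apply Rabs_row_bias_le; assumption.
Qed.

Lemma eps_q_lub : is_lub (bias_set m n G) (eps_q m n G).
Proof.
  apply lub_epsilon_spec.
  - exists 1; intros b [N [u [v [Hs ->]]]].
    apply Rabs_bias_le1, Rabs_le_inv in Hs; lra.
  - exists (bias m n 1 G (fun _ _ => 1) (fun _ _ => 1)), 1%nat, (fun _ _ => 1), (fun _ _ => 1).
    split; [split; intros; unfold dot; simpl; ring | reflexivity].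
Qed.

Lemma bias_le_eps_q N u v : vector_strategy m n N u v -> bias m n N G u v <= eps_q m n G.
Proof. intros Hs; apply eps_q_lub; exists N, u, v; split; [exact Hs | reflexivity]. Qed.

Lemma exists_eps_optimal eps : 0 < eps -> exists N u v, eps_optimal m n N G eps u v.
Proof.
  intros He; apply NNPP; intros Hno.
  assert (Hub : is_upper_bound (bias_set m n G) (eps_q m n G - eps)).
  { intros b [N [u [v [Hs ->]]]]; apply Rnot_lt_le; intros Hlt.
    apply Hno; exists N, u, v; split; [exact Hs | lra]. }
  pose proof (proj2 eps_q_lub _ Hub); lra.
Qed.

Lemma sum_row_norms_le_eps_q N u v : vector_strategy m n N u v ->
  sumR m (fun i => vnorm N (row_comb n G i v)) <= eps_q m n G.
Proof.
  intros [_ Hv].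
  set (u' := fun i => unit_dir N (row_comb n G i v)).
  set (v' := fun j => cat N (v j) (fun _ => 0)).
  assert (Hs : vector_strategy m n (N + 1) u' v').
  { split; intros; unfold u', v'; [apply unit_dir_unit|].
    rewrite dot_cat, dot_const1, Hv by assumption; ring. }
  eapply Rle_trans; [right | apply (bias_le_eps_q _ _ _ Hs)].
  apply sumR_ext; intros i _; unfold u', v'.
  rewrite (sumR_ext n _ (fun j => / vnorm N (row_comb n G i v) *
                                  (G i j * dot N (row_comb n G i v) (v j)))).
  - rewrite sumR_scal, <- dot_row_comb, <- vnorm_sqr, Rmult_comm; symmetry; apply Rmult_self_div.
  - intros j _; rewrite dot_unit_dir; unfold Rdiv; ring.
Qed.

Lemma row_defect_bounds N eps u v i : eps_optimal m n N G eps u v -> (i < m)%nat ->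
  row_bias N u v i <= vnorm N (row_comb n G i v) <= row_bias N u v i + eps.
Proof.
  intros [Hs Hb] Hi.
  assert (Hd : forall k, (k < m)%nat -> 0 <= vnorm N (row_comb n G k v) - row_bias N u v k)
    by (intros k Hk; pose proof (row_bias_le_vnorm N u v k Hs Hk); lra).
  pose proof (term_le_sumR m _ i Hd Hi) as Hterm.
  rewrite sumR_minus, <- bias_rows in Hterm.
  pose proof (sum_row_norms_le_eps_q N u v Hs); pose proof (Hd i Hi); lra.
Qed.


Lemma row_norms_close N1 N2 e1 e2 u1 v1 u2 v2 i : 0 <= e1 -> 0 <= e2 ->
  eps_optimal m n N1 G e1 u1 v1 -> eps_optimal m n N2 G e2 u2 v2 -> (i < m)%nat ->
  Rabs (vnorm N1 (row_comb n G i v1) - vnorm N2 (row_comb n G i v2))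
    <= 2 * (sqrt e1 + sqrt e2).
Proof.
  intros He1 He2 H1 H2 Hi.
  set (r1 := row_comb n G i v1); set (r2 := row_comb n G i v2).
  set (a1 := vnorm N1 r1); set (a2 := vnorm N2 r2).
  assert (Hnorm : vnorm (N1 + N2) (row_comb n G i (fun j => cat_avg N1 (v1 j) (v2 j)))
                  = sqrt ((a1 ^ 2 + a2 ^ 2) / 2)).
  { unfold vnorm at 1; f_equal.
    rewrite (dot_ext _ _ _ (cat_avg N1 r1 r2) (cat_avg N1 r1 r2))
      by (intros; apply row_comb_cat_avg).
    rewrite dot_cat_avg, <- !vnorm_sqr; unfold a1, a2; field. }
  assert (Hbias : row_bias (N1 + N2) (fun i => cat_avg N1 (u1 i) (u2 i))
                    (fun j => cat_avg N1 (v1 j) (v2 j)) i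
                  = (row_bias N1 u1 v1 i + row_bias N2 u2 v2 i) / 2).
  { unfold row_bias.
    rewrite (dot_ext _ _ _ (cat_avg N1 (u1 i) (u2 i)) (cat_avg N1 r1 r2))
      by (intros; first [reflexivity | apply row_comb_cat_avg]).
    apply dot_cat_avg. }
  pose proof (row_defect_bounds _ _ _ _ i (cat_avg_eps_optimal _ _ _ _ _ _ _ _ H1 H2) Hi) as Hmid.
  rewrite Hnorm, Hbias in Hmid.
  pose proof (row_defect_bounds _ _ _ _ i H1 Hi); pose proof (row_defect_bounds _ _ _ _ i H2 Hi).
  assert (Ha1 : 0 <= a1 <= 1).
  { split; [apply sqrt_pos | eapply Rle_trans].
    - apply vnorm_row_comb_le, (proj2 (proj1 H1)).
    - apply row_l1_le1, Hi. }
  assert (Ha2 : 0 <= a2 <= 1).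
  { split; [apply sqrt_pos | eapply Rle_trans].
    - apply vnorm_row_comb_le, (proj2 (proj1 H2)).
    - apply row_l1_le1, Hi. }
  pose proof (sqr_sub_le_rms_sub_mean a1 a2 Ha1 Ha2).
  pose proof (sqrt_sqrt e1 He1); pose proof (sqrt_sqrt e2 He2).
  pose proof (sqrt_pos e1); pose proof (sqrt_pos e2).
  rewrite <- (Rabs_pos_eq (2 * (sqrt e1 + sqrt e2))) by lra.
  apply Rsqr_le_abs_0; unfold Rsqr, a1, a2, r1, r2 in *; nra.
Qed.

Definition row_value_candidates i (z : R) : Prop :=
  exists eps N u v, 0 <= eps /\ eps_optimal m n N G eps u v /\
    z = vnorm N (row_comb n G i v) - 2 * sqrt eps.

(* As a supremum, c_i exists without a compactness argument producing an
   optimal strategy. *)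
Definition row_value i := Rmax 0 (epsilon (inhabits 0) (is_lub (row_value_candidates i))).

Lemma row_value_nonneg i : 0 <= row_value i.
Proof. apply Rmax_l. Qed.

Lemma row_value_close N eps u v i : 0 <= eps -> eps_optimal m n N G eps u v -> (i < m)%nat ->
  Rabs (vnorm N (row_comb n G i v) - row_value i) <= 2 * sqrt eps.
Proof.
  intros He Ho Hi; set (y := vnorm N (row_comb n G i v)).
  assert (Hub : is_upper_bound (row_value_candidates i) (y + 2 * sqrt eps)).
  { intros z [e' [N' [u' [v' [He' [Ho' ->]]]]]].
    pose proof (row_norms_close N' N e' eps u' v' u v i He' He Ho' Ho Hi) as Hc.
    apply Rabs_le_inv in Hc; fold y in Hc; lra. }
  assert (Hy : row_value_candidates i (y - 2 * sqrt eps))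
    by (exists eps, N, u, v; split; [exact He | split; [exact Ho | reflexivity]]).
  destruct (lub_epsilon_spec _ (ex_intro _ _ Hub) (ex_intro _ _ Hy)) as [Hlub Hleast].
  pose proof (Hlub _ Hy); pose proof (Hleast _ Hub).
  assert (0 <= y) by apply sqrt_pos.
  unfold row_value, Rmax; destruct Rle_dec; apply Rabs_le; lra.
Qed.

Lemma hypot_le_eps_q N u v i0 : vector_strategy m n N u v -> (i0 < m)%nat -> 0 < row_l1 i0 ->
  sqrt ((bias m n N G u v - row_bias N u v i0) ^ 2 + row_l1 i0 ^ 2) <= eps_q m n G.
Proof.
  intros [Hu Hv] Hi0 Ha.
  set (b := bias m n N G u v - row_bias N u v i0); set (a := row_l1 i0).
  set (r := sqrt (b ^ 2 + a ^ 2)).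
  assert (0 < b ^ 2 + a ^ 2) by (pose proof (pow2_ge_0 b); pose proof (pow_lt a 2 Ha); lra).
  assert (Hr : r * r = b ^ 2 + a ^ 2) by (apply sqrt_sqrt; lra).
  assert (0 < r) by (apply sqrt_lt_R0; lra).
  set (sg := fun j => if Rle_dec 0 (G i0 j) then 1 else -1).
  assert (Hsg : forall j, G i0 j * sg j = Rabs (G i0 j) /\ sg j * sg j = 1).
  { intros j; unfold sg; destruct (Rle_dec 0 (G i0 j));
      [rewrite Rabs_right | rewrite Rabs_left]; lra. }
  (* Row i0 plays a fresh direction e and every v_j is tilted towards ±e; the
     weights b/r and a/r maximise b·cos + a·sin, giving bias r. *)
  set (u' := fun i => if Nat.eqb i i0 then cat N (fun _ => 0) (fun _ => 1)
                      else cat N (u i) (fun _ => 0)).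
  set (v' := fun j => cat N (fun k => v j k * (b / r)) (fun _ => a / r * sg j)).
  assert (Hs : vector_strategy m n (N + 1) u' v').
  { split.
    - intros i Hi; unfold u'; destruct (Nat.eqb i i0); rewrite dot_cat, dot_const1;
        [rewrite dot_zero_l | rewrite Hu by exact Hi]; ring.
    - intros j Hj; unfold v'; rewrite dot_cat, dot_scal_l, dot_scal_r, Hv, dot_const1 by exact Hj.
      destruct (Hsg j) as [_ Hsg2].
      replace (b / r * (b / r * 1) + a / r * sg j * (a / r * sg j))
        with ((b ^ 2 + a ^ 2 * (sg j * sg j)) / (r * r)) by (field; lra).
      rewrite Hsg2, Hr; field; nra. }
  eapply Rle_trans; [right | apply (bias_le_eps_q _ _ _ Hs)].
  rewrite bias_rows.
  rewrite (sumR_ext m _ (fun i => if Nat.eqb i i0 then a * a / r else b / r * row_bias N u v i)).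
  - rewrite sumR_update, sumR_scal, <- bias_rows by exact Hi0; fold b.
    replace (b / r * bias m n N G u v - b / r * row_bias N u v i0 + a * a / r)
      with ((b ^ 2 + a ^ 2) / r) by (unfold b; field; lra).
    rewrite <- Hr; field; lra.
  - intros i Hi; unfold row_bias, u'; rewrite !dot_row_comb.
    destruct (Nat.eqb_spec i i0) as [-> | _].
    + replace (a * a / r) with (a / r * sumR n (fun j => Rabs (G i0 j)))
        by (unfold a, row_l1; field; lra).
      rewrite <- sumR_scal; apply sumR_ext; intros j _; unfold v'.
      rewrite dot_cat, dot_zero_l, dot_const1, <- (proj1 (Hsg j)); ring.
    + rewrite <- sumR_scal; apply sumR_ext; intros j _; unfold v'.
      rewrite dot_cat, dot_const1, dot_scal_r; ring.
Qed.

Lemma row_value_pos i0 : (i0 < m)%nat -> (exists j, (j < n)%nat /\ G i0 j <> 0) ->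
  0 < row_value i0.
Proof.
  intros Hi0 [j0 [Hj0 HG0]].
  assert (Ha : 0 < row_l1 i0 <= 1).
  { split; [|apply row_l1_le1, Hi0].
    pose proof (term_le_sumR n (fun j => Rabs (G i0 j)) j0 (fun _ _ => Rabs_pos _) Hj0).
    pose proof (Rabs_pos_lt _ HG0); unfold row_l1; lra. }
  assert (Ha2 : 0 < row_l1 i0 ^ 2 <= 1).
  { split; [apply pow_lt | rewrite <- (pow1 2); apply pow_incr]; lra. }
  set (eps := (row_l1 i0 ^ 2 / 36) ^ 2).
  assert (Hse : sqrt eps = row_l1 i0 ^ 2 / 36) by (apply sqrt_pow2; lra).
  assert (He : 0 < eps) by (apply pow_lt; lra).
  destruct (exists_eps_optimal eps He) as [N [u [v Ho]]].
  pose proof (hypot_le_eps_q N u v i0 (proj1 Ho) Hi0 (proj1 Ha)).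
  pose proof (Rabs_le_inv _ _ (Rabs_bias_le1 _ _ _ (proj1 Ho))).
  pose proof (Rabs_le_inv _ _ (Rabs_row_bias_le N u v i0 (proj1 Ho) Hi0)).
  pose proof (sqr_le_of_hypot_le (row_l1 i0) (bias m n N G u v - row_bias N u v i0)
                (row_bias N u v i0 + eps) Ha ltac:(lra) ltac:(destruct Ho; lra)).
  pose proof (row_defect_bounds N eps u v i0 Ho Hi0).
  pose proof (Rabs_le_inv _ _ (row_value_close N eps u v i0 (Rlt_le _ _ He) Ho Hi0)).
  rewrite Hse in *; unfold eps in *; nra.
Qed.

Lemma row_comb_sub_sqnorm_le N eps u v i : 0 <= eps <= 1 / 4 ->
  eps_optimal m n N G eps u v -> (i < m)%nat ->
  dot N (fun k => row_comb n G i v k - row_value i * u i k)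
        (fun k => row_comb n G i v k - row_value i * u i k) <= 8 * eps.
Proof.
  intros He Ho Hi.
  rewrite dot_sub_scal, <- vnorm_sqr, (proj1 (proj1 Ho) i Hi).
  change (dot N (u i) (row_comb n G i v)) with (row_bias N u v i).
  pose proof (row_defect_bounds N eps u v i Ho Hi).
  pose proof (Rabs_le_inv _ _ (row_value_close N eps u v i (proj1 He) Ho Hi)).
  assert (vnorm N (row_comb n G i v) <= 1).
  { eapply Rle_trans; [apply vnorm_row_comb_le, (proj2 (proj1 Ho)) | apply row_l1_le1, Hi]. }
  pose proof (row_value_nonneg i).
  pose proof (sqrt_sqrt eps (proj1 He)); pose proof (sqrt_pos eps).
  pose proof (sqrt_le_half eps (proj2 He)).
  set (a := vnorm N (row_comb n G i v)) in *; set (c := row_value i) in *.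
  set (q := row_bias N u v i) in *; set (s := sqrt eps) in *.
  assert (Hac : (a - c) * (a - c) <= 4 * eps) by nra.
  assert (Hcq : 2 * c * (a - q) <= 4 * eps) by nra.
  nra.
Qed.

End Optimality.

End Game.

Theorem theorem3p1 (m n : nat) (G : nat -> nat -> R) :
  xor_game m n G ->
  exists c : nat -> R,
    (forall i, (i < m)%nat -> 0 <= c i) /\
    (forall (eps : R), 0 <= eps -> eps < 1 / (4 * INR (m + n)) ->
       forall (N : nat) (u v : nat -> nat -> R),
       eps_optimal m n N G eps u v ->
       forall i, (i < m)%nat ->
         vnorm N (fun k => row_comb n G i v k - c i * u i k)
           <= sqrt 10 * sqrt (sqrt (INR (m + n))) * sqrt (sqrt eps)) /\
    (forall (N : nat) (u v : nat -> nat -> R),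
       optimal m n N G u v ->
       forall i, (i < m)%nat ->
         (forall k, (k < N)%nat -> row_comb n G i v k = c i * u i k) /\
         sumR n (fun j => G i j * dot N (u i) (v j)) = c i) /\
    ((forall i, (i < m)%nat -> exists j, (j < n)%nat /\ G i j <> 0) ->
       forall i, (i < m)%nat -> 0 < c i).
Proof.
  intros game; exists (row_value m n G); split; [|split; [|split]].
  - intros i _; apply row_value_nonneg.
  - intros eps He Hlt N u v Ho i Hi.
    assert (HM : 1 <= INR (m + n)) by (apply (le_INR 1); lia).
    assert (He4 : eps <= 1 / 4).
    { apply Rlt_le, (Rlt_le_trans _ _ _ Hlt); unfold Rdiv; rewrite !Rmult_1_l.
      apply Rinv_le_contravar; lra. }
    pose proof (row_comb_sub_sqnorm_le m n G game N eps u v i (conj He He4) Ho Hi).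
    pose proof (sqrt_le_half eps He4); pose proof (sqrt_sqrt eps He); pose proof (sqrt_pos eps).
    assert (1 <= sqrt (INR (m + n))) by (rewrite <- sqrt_1; apply sqrt_le_1_alt; lra).
    unfold vnorm; rewrite <- !sqrt_mult_alt by nra; apply sqrt_le_1_alt; nra.
  - intros N u v Ho i Hi.
    pose proof (row_comb_sub_sqnorm_le m n G game N 0 u v i ltac:(lra) Ho Hi) as Hd.
    pose proof (dot_nonneg N (fun k => row_comb n G i v k - row_value m n G i * u i k)).
    pose proof (dot_self_eq0 N (fun k => row_comb n G i v k - row_value m n G i * u i k)
                  ltac:(lra)) as Hzero.
    pose proof (row_defect_bounds m n G game N 0 u v i Ho Hi).
    pose proof (Rabs_le_inv _ _ (row_value_close m n G game N 0 u v i (Rle_refl 0) Ho Hi)).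
    rewrite sqrt_0 in *; split.
    + intros k Hk; specialize (Hzero k Hk); cbv beta in Hzero; lra.
    + rewrite <- dot_row_comb; unfold row_bias in *; lra.
  - intros Hrows i Hi; apply row_value_pos; auto.
Qed.
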